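(* In the setting of the context, for every $N$-tuple of integers $\mathbf{x}=(x_1,\dots,x_N)$ with $0\le x_p\le \ell_p$, define \[ V(\mathbf{x})=\sum_{\mathbf{n}=\mathbf{x}}^{\boldsymbol{\ell}}\mathscr{C}_{\mathbf{n},\mathbf{x}}V^{\mathbf{n}},\qquad \mathscr{C}_{\mathbf{n},\mathbf{x}}=\frac{(-1)^{|\mathbf{n}|-|\mathbf{x}|}}{(2|\mathbf{x}|+\omega+1)_{|\mathbf{n}|-|\mathbf{x}|}}\prod_{p=1}^N\binom{n_p}{x_p}\big(|\mathbf{n}|_1^{p-1}+|\mathbf{x}|_1^{p}+|\boldsymbol{\ell}|_p^N+a_p+\omega+1\big)_{n_p-x_p}, \] where $\sum_{\mathbf{n}=\mathbf{x}}^{\boldsymbol{\ell}}$ denotes the sum over all $\mathbf{n}$ with $x_p\le n_p\le\ell_p$ for every $p$. Then $A\,V(\mathbf{x})=\theta_{|\mathbf{x}|}V(\mathbf{x})$.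
   Context: Notation: for $N$-tuples $\mathbf{n}=(n_1,\dots,n_N)$ of integers, $|\mathbf{n}|_j^k=\sum_{p=j}^k n_p$ (equal to $0$ if $j>k$), $|\mathbf{n}|=|\mathbf{n}|_1^N$, $\mathbf{e}_p$ is the $p$-th unit $N$-tuple, and tuples are added componentwise. $(x)_k=x(x+1)\cdots(x+k-1)$, $(x)_0=1$. Setting: $N\ge1$, $\boldsymbol{\ell}=(\ell_1,\dots,\ell_N)$ nonnegative integers, $\mathcal{V}=\mathbb{C}^{\ell_1+1}\otimes\cdots\otimes\mathbb{C}^{\ell_N+1}$ with basis $V^{\mathbf{n}}$, $0\le n_p\le\ell_p$; $V^{\mathbf{n}}=0$ if some $n_p<0$ or $n_p>\ell_p$. Fix scalars $\theta_0,\theta_0^\star,h,h^\star,\omega,\omega^\star,a_1,\dots,a_N\in\mathbb{C}$; $\theta_i=\theta_0+hi(i+\omega)$, $\theta^\star_i=\theta^\star_0+h^\star i(i+\omega^\star)$. For $p=1,\dots,N$: $\xi_{\mathbf{n},p}=h(|\mathbf{n}|_1^{p-1}+|\mathbf{n}|_1^p+|\boldsymbol{\ell}|_p^N+a_p+\omega)n_p$, $\xi^\star_{\mathbf{n},p}=h^\star(|\mathbf{n}|_1^{p-1}+|\mathbf{n}|_1^p+|\boldsymbol{\ell}|_{p+1}^N-a_p+\omega^\star)(n_p-\ell_p)$. The operators are $A V^{\mathbf{n}}=\theta_{|\mathbf{n}|}V^{\mathbf{n}}+\sum_{p=1}^N\xi_{\mathbf{n}+\mathbf{e}_p,p}V^{\mathbf{n}+\mathbf{e}_p}$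 and $A^\star V^{\mathbf{n}}=\theta^\star_{|\mathbf{n}|}V^{\mathbf{n}}+\sum_{p=1}^N\xi^\star_{\mathbf{n}-\mathbf{e}_p,p}V^{\mathbf{n}-\mathbf{e}_p}$. Standing constraints: $h,h^\star\neq0$; $\omega,\omega^\star\notin\{-2|\boldsymbol{\ell}|+1,\dots,-1\}$; for each $i$, none of $a_i,\ a_i+\omega-\omega^\star,\ a_i-|\boldsymbol{\ell}|-\omega^\star,\ a_i+|\boldsymbol{\ell}|+\omega$ lies in $\{-\ell_i,\dots,-1\}$; and with $S^\pm(\ell,a)=\{\pm(a+k+\tfrac12(\omega-\omega^\star)):k=1,\dots,\ell\}$, for all $i,j$ and signs $\epsilon_i,\epsilon_j$, $S^{\epsilon_i}(\ell_i,a_i)$ and $S^{\epsilon_j}(\ell_j,a_j)$ are in general position (one contains the other or their union is not a string). *)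

From HB Require Import structures.
From mathcomp Require Import all_boot all_order all_algebra.
Set Implicit Arguments. Unset Strict Implicit. Unset Printing Implicit Defensive.
Import Order.TTheory GRing.Theory Num.Theory.
Local Open Scope ring_scope.

Section Defs.
Variable C : numClosedFieldType.
Variable N : nat.
Variable ell : 'I_N -> nat.

(* Index tuples n with 0 <= n_p are stored as finite functions into 'I_bnd;
   the valid ones (the basis indices of V) are those with n_p <= ell_p. *)
Definition bnd : nat := (\max_(p < N) ell p).+1.
Local Notation Idx := {ffun 'I_N -> 'I_bnd}.

Definition valid (m : Idx) : bool := [forall p, (m p <= ell p)%N].

(* integer N-tuples; coordinate p : 'I_N stands for the paper's index p+1 *)
Definition tup (m : Idx) : 'I_N -> int := fun p => (m p : nat)%:Z.
Definition ellZ : 'I_N -> int := fun p => (ell p)%:Z.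
Definition unitT (p : 'I_N) : 'I_N -> int := fun i => (i == p)%:Z.
Definition addT (n m : 'I_N -> int) : 'I_N -> int := fun i => n i + m i.

(* |n|_j^k = sum_{p=j}^k n_p, 1-based (0 if j > k) *)
Definition psum (n : 'I_N -> int) (j k : nat) : int :=
  \sum_(i < N | (j <= i.+1 <= k)%N) n i.
Definition tabs (n : 'I_N -> int) : int := psum n 1 N.

(* vectors of V = C^{l_1+1} (x) ... (x) C^{l_N+1}: coordinates on the valid
   indices (coordinates at invalid indices are always 0 for basis vectors). *)
Local Notation vect := {ffun Idx -> C^o}.

(* basis vector V^n; it is 0 when n is out of range *)
Definition bvec (n : 'I_N -> int) : vect :=
  [ffun m => if valid m && [forall p, tup m p == n p] then 1 else 0].

Variables (theta0 h omega : C) (a : 'I_N -> C).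

Definition theta (i : int) : C := theta0 + h * i%:~R * (i%:~R + omega).

(* xi_{n,p} for paper index p+1 *)
Definition xi (n : 'I_N -> int) (p : 'I_N) : C :=
  h * ((psum n 1 p)%:~R + (psum n 1 p.+1)%:~R + (psum ellZ p.+1 N)%:~R
       + a p + omega) * (n p)%:~R.

Definition Abasis (n : 'I_N -> int) : vect :=
  theta (tabs n) *: bvec n
  + \sum_(p < N) xi (addT n (unitT p)) p *: bvec (addT n (unitT p)).

Definition Aop (v : vect) : vect :=
  \sum_(m : Idx | valid m) v m *: Abasis (tup m).

Definition poch (x : C) (k : nat) : C := \prod_(i < k) (x + i%:R).

Definition nsum (m : Idx) : nat := \sum_(p < N) (m p : nat).

Definition Ccoef (n x : Idx) : C :=
  (-1) ^+ (nsum n - nsum x)%N / poch ((2 * nsum x)%:R + omega + 1) (nsum n - nsum x)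
  * \prod_(p < N) ('C(n p, x p)%:R
      * poch ((psum (tup n) 1 p)%:~R + (psum (tup x) 1 p.+1)%:~R
              + (psum ellZ p.+1 N)%:~R + a p + omega + 1) (n p - x p)).

Definition Vx (x : Idx) : vect :=
  \sum_(n : Idx | valid n && [forall p, (x p <= n p)%N]) Ccoef n x *: bvec (tup n).

End Defs.

Definition is_string (C : numClosedFieldType) (s : seq C) : Prop :=
  exists (c : C) (m : nat),
    forall z, (z \in s) = (z \in [seq c + j%:R | j <- iota 0 m.+1]).

Definition gen_pos (C : numClosedFieldType) (s1 s2 : seq C) : Prop :=
  {subset s1 <= s2} \/ {subset s2 <= s1} \/ ~ is_string (s1 ++ s2).

Definition Sset (C : numClosedFieldType) (omega omegas : C)
    (eps : bool) (l : nat) (a : C) : seq C :=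
  [seq (if eps then 1 else -1) * (a + k%:R + (omega - omegas) / 2%:R)
  | k <- iota 1 l].

From HB Require Import structures.
From mathcomp Require Import all_boot all_order all_algebra.
From mathcomp Require Import ring zify.
Set Implicit Arguments. Unset Strict Implicit. Unset Printing Implicit Defensive.
Import Order.TTheory GRing.Theory Num.Theory.
Local Open Scope ring_scope.

(* Fix a valid m and compare coordinates at V^m.  The product part of C_{m,x} is
   Z(N), where Z(j) = coef_prod j is the product with the Pochhammer arguments of the factors
   q < j raised by one.  Decreasing coordinate p of m only lowers those arguments
   for q > p, so by (G+1)_k - (G)_k = k (G+1)_{k-1} the coefficient C_{m-e_p,x}
   times m_p is proportional to Z(p+1) - Z(p).  Multiplied by xi_{m,p} this is the
   discrete derivative of s(j) Z(j), with s(j) = |m|_1^j - |x|_1^j, so the sum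
   over p telescopes to (|m| - |x|) Z(N).  This balances
   theta_{|m|} - theta_{|x|} = h (|m| - |x|) (|m| + |x| + omega) against the last
   factor of the denominator (2|x| + omega + 1)_{|m|-|x|}. *)

Section Pochhammer.
Variable C : numClosedFieldType.
Implicit Types (z : C) (k : nat).

Lemma poch0 z : poch z 0 = 1.
Proof. by rewrite /poch big_ord0. Qed.

Lemma pochS z k : poch z k.+1 = poch z k * (z + k%:R).
Proof. by rewrite /poch big_ord_recr. Qed.

Lemma pochSl z k : poch z k.+1 = z * poch (z + 1) k.
Proof.
rewrite /poch big_ord_recl addr0; congr (_ * _); apply: eq_bigr => i _.
by rewrite lift0 /= -natr1; ring.
Qed.

Lemma poch_shiftS z k :
  k.+1%:R * poch (z + 1) k = poch (z + 1) k.+1 - poch z k.+1.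
Proof. by rewrite pochS pochSl -natr1; ring. Qed.

Lemma poch_shift z k :
  (z + k%:R) * (poch (z + 1) k - poch z k) = k%:R * poch (z + 1) k.
Proof.
case: k => [|k]; first by rewrite !poch0 subrr mulr0 mul0r.
by rewrite -poch_shiftS pochS -natr1; ring.
Qed.

End Pochhammer.

Section Indices.
Variables (C : numClosedFieldType) (N : nat) (ell : 'I_N -> nat).
Local Notation Idx := {ffun 'I_N -> 'I_(bnd ell)}.
Implicit Types (m n u v : Idx) (p : 'I_N).

Definition idx_le u v : bool := [forall p, (u p <= v p)%N].

Lemma nsum_le u v : idx_le u v -> (nsum u <= nsum v)%N.
Proof. by move=> /forallP uv; apply: leq_sum => p _; apply: uv. Qed.

Lemma nsum_valid u : valid u -> (nsum u <= \sum_(p < N) ell p)%N.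
Proof. by move=> /forallP vu; apply: leq_sum => p _; apply: vu. Qed.

Lemma eq_tup m n : [forall p, tup m p == tup n p] = (m == n).
Proof.
apply/forallP/eqP => [eq_mn|-> //]; apply/ffunP => p; apply/val_inj.
by have /eqP [] := eq_mn p.
Qed.

(* Truncated: [decr m p = m] when [m p = 0]. *)
Definition decr m p : Idx :=
  [ffun i => if i == p then Ordinal (leq_ltn_trans (leq_pred (m i)) (ltn_ord (m i)))
             else m i].

Lemma decrE m p i : (decr m p i : nat) = if i == p then (m i).-1 else m i.
Proof. by rewrite ffunE; case: eqP. Qed.

Lemma valid_decr m p : valid m -> valid (decr m p).
Proof.
move=> /forallP vm; apply/forallP => i; rewrite decrE.
by case: eqP => _; have := vm i; lia.
Qed.

Lemma nsum_decr m p : (0 < m p)%N -> (nsum (decr m p)).+1 = nsum m.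
Proof.
move=> mp; rewrite /nsum (bigD1 p) //= [in RHS](bigD1 p) //= decrE eqxx.
rewrite -addSn prednK //; congr (_ + _)%N; apply: eq_bigr => i /negbTE ip.
by rewrite decrE ip.
Qed.

Lemma idx_le_decrW u m p : idx_le u (decr m p) -> idx_le u m.
Proof.
move=> /forallP le_u; apply/forallP => i; have := le_u i; rewrite decrE.
by case: eqP => _; lia.
Qed.

Lemma idx_le_decr u m p : idx_le u m -> (0 < m p)%N ->
  idx_le u (decr m p) = (u p < m p)%N.
Proof.
move=> /forallP le_u mp; apply/forallP/idP => [/(_ p)|lt_p i].
  by rewrite decrE eqxx; have := le_u p; lia.
by rewrite decrE; case: eqP => [->|_]; have := le_u i; lia.
Qed.

Lemma tup_eq_shift m n p :
  [forall i, tup m i == addT (tup n) (unitT p) i] = (0 < m p)%N && (n == decr m p).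
Proof.
rewrite /tup /addT /unitT; apply/forallP/andP => [eq_m|[mp /eqP ->] i].
  have m_p : (0 < m p)%N by have /eqP := eq_m p; rewrite eqxx -PoszD => -[]; lia.
  split=> //; apply/eqP/ffunP => i; apply/val_inj; rewrite /= decrE.
  by have /eqP := eq_m i; rewrite -PoszD => -[]; case: (i =P p) => _; lia.
by rewrite decrE -PoszD; case: (i =P p) => [->|_]; apply/eqP; congr Posz; lia.
Qed.

Lemma addT_tup_decr m p : (0 < m p)%N -> addT (tup (decr m p)) (unitT p) =1 tup m.
Proof.
move=> mp i; rewrite /addT /tup /unitT decrE -PoszD; congr Posz.
by case: eqP => [->|_]; lia.
Qed.

Definition presum n (q : nat) : C := \sum_(i < N | (i < q)%N) (n i)%:R.

Lemma psum_tupE n q : (psum (tup n) 1 q)%:~R = presum n q.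
Proof. by rewrite /psum rmorph_sum; apply: eq_big. Qed.

Lemma presum0 n : presum n 0 = 0.
Proof. by rewrite /presum big_pred0. Qed.

Lemma presumS n p : presum n p.+1 = presum n p + (n p)%:R.
Proof.
rewrite /presum (bigD1 p) //= addrC; congr (_ + _); apply: eq_bigl => i.
by rewrite ltnS -val_eqE /=; case: ltngtP.
Qed.

Lemma presumN n : presum n N = (nsum n)%:R.
Proof. by rewrite /presum /nsum natr_sum; apply: eq_bigl => i; rewrite ltn_ord. Qed.

Lemma tabs_tupE n : (tabs (tup n))%:~R = (nsum n)%:R :> C.
Proof. by rewrite /tabs psum_tupE presumN. Qed.

Lemma presum_decr m p q : (0 < m p)%N ->
  presum (decr m p) q = presum m q - (p < q)%N%:R.
Proof.
move=> mp; rewrite /presum.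
transitivity (\sum_(i < N | (i < q)%N) ((m i)%:R - (i == p)%:R : C)).
  apply: eq_bigr => i _; rewrite decrE; case: (i =P p) => [->|_]; last by rewrite subr0.
  by rewrite -natrB //; congr _%:R; lia.
rewrite sumrB; congr (_ - _); case: (ltnP p q) => [pq|qp].
  by rewrite (bigD1 p) //= eqxx big1 ?addr0 // => i /andP[_ /negbTE ->].
by rewrite big1 // => i iq; case: (i =P p) => // eq_ip; move: iq; rewrite eq_ip; lia.
Qed.
End Indices.

Section Operator.
Variables (C : numClosedFieldType) (N : nat) (ell : 'I_N -> nat).
Variables (theta0 h omega : C) (a : 'I_N -> C).
Local Notation Idx := {ffun 'I_N -> 'I_(bnd ell)}.
Local Notation vect := {ffun Idx -> C^o}.
Local Notation xi := (xi ell h omega a).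
Local Notation bvec := (bvec C ell).
Implicit Types (m n : Idx) (p : 'I_N) (v : vect).

Lemma scale_ffunE v (c : C) m : (c *: v) m = c * v m.
Proof. by rewrite ffunE. Qed.

Lemma bvec_tupE n m : valid n -> bvec (tup n) m = (m == n)%:R.
Proof.
move=> vn; rewrite ffunE eq_tup; case: eqP => [->|_]; last by rewrite andbF.
by rewrite vn.
Qed.

Lemma bvec_invalid k m : ~~ valid m -> bvec k m = 0.
Proof. by rewrite ffunE => /negbTE ->. Qed.

Lemma bvec_shiftE n p m : valid m ->
  bvec (addT (tup n) (unitT p)) m = ((0 < m p)%N && (n == decr m p))%:R.
Proof. by move=> vm; rewrite ffunE vm tup_eq_shift /=; case: (_ && _). Qed.

Lemma eq_xi f g p : f =1 g -> xi f p = xi g p.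
Proof.
move=> fg; have psumE j k : psum f j k = psum g j k by apply: eq_bigr => i _.
by rewrite /xi !psumE fg.
Qed.

Lemma xi_tup0 m p : (m p : nat) = 0%N -> xi (tup m) p = 0.
Proof. by rewrite /xi /tup => ->; rewrite mulr0. Qed.

Lemma Aop_invalid v m : ~~ valid m -> Aop theta0 h omega a v m = 0.
Proof.
move=> im; rewrite sum_ffunE big1 // => n _.
rewrite scale_ffunE ffunE scale_ffunE bvec_invalid // mulr0 add0r sum_ffunE big1 ?mulr0 //.
by move=> p _; rewrite scale_ffunE bvec_invalid // mulr0.
Qed.

(* The spurious terms with [m p = 0] vanish since xi_{m,p} has the factor m_p. *)
Lemma Aop_valid v m : valid m ->
  Aop theta0 h omega a v m = v m * theta theta0 h omega (tabs (tup m))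
                             + \sum_(p < N) v (decr m p) * xi (tup m) p.
Proof.
move=> vm; rewrite sum_ffunE.
under eq_bigr => n vn.
  rewrite scale_ffunE ffunE scale_ffunE bvec_tupE // sum_ffunE mulrDr mulr_sumr.
  under eq_bigr => p _ do rewrite scale_ffunE bvec_shiftE // mulrA.
  over.
rewrite big_split /=; congr (_ + _).
  rewrite (bigD1 m) //= eqxx mulr1 big1 ?addr0 // => n /andP[_ nm].
  by rewrite eq_sym (negbTE nm) !mulr0.
rewrite exchange_big /=; apply: eq_bigr => p _.
have [mp0|mp] := posnP (m p).
  by rewrite xi_tup0 // mulr0 big1 // => n _; rewrite mulr0.
rewrite (bigD1 (decr m p)) ?valid_decr //= eqxx mulr1 big1 ?addr0.
  by rewrite -(eq_xi _ (addT_tup_decr mp)) mulrA.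
by move=> n /andP[_ /negbTE ->]; rewrite mulr0.
Qed.

Lemma VxE x n :
  Vx omega a x n = if valid n && idx_le x n then Ccoef omega a n x else 0.
Proof.
rewrite sum_ffunE; case: ifP => le_xn.
  rewrite (bigD1 n) //= scale_ffunE bvec_tupE ?eqxx ?mulr1; last by case/andP: le_xn.
  rewrite big1 ?addr0 // => k /andP[/andP[vk _] kn].
  by rewrite scale_ffunE bvec_tupE // eq_sym (negbTE kn) mulr0.
rewrite big1 // => k /andP[vk le_xk]; rewrite scale_ffunE bvec_tupE //.
by case: eqP => [nk|_]; [move: le_xn; rewrite nk vk /idx_le le_xk | rewrite mulr0].
Qed.

End Operator.

Section EigenCoordinate.
Variables (C : numClosedFieldType) (N : nat) (ell : 'I_N -> nat).
Variables (theta0 h omega : C) (a : 'I_N -> C).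
Local Notation Idx := {ffun 'I_N -> 'I_(bnd ell)}.
Local Notation xi := (xi ell h omega a).
Local Notation theta := (theta theta0 h omega).
Variables (x m : Idx).
Hypothesis valid_m : valid m.
Implicit Types (p q : 'I_N) (j : nat).

Section Dominated.
Hypothesis x_le_m : idx_le x m.

Definition gap q : nat := (m q - x q)%N.

Definition base q : C :=
  presum C m q + presum C x q.+1 + (psum (ellZ ell) q.+1 N)%:~R + a q + omega.

Definition coef_factor j q : C :=
  'C(m q, x q)%:R * poch (if (q < j)%N then base q + 1 else base q) (gap q).

Definition coef_prod j : C := \prod_(q < N) coef_factor j q.

Definition excess j : C := presum C m j - presum C x j.

Local Notation d := (nsum m - nsum x)%N.
Local Notation prefactor k := ((-1) ^+ k / poch ((2 * nsum x)%:R + omega + 1) k).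

Lemma x_le_m_at p : (x p <= m p)%N.
Proof. exact: forallP x_le_m p. Qed.

Lemma coef_factor_ne p q : q != p -> coef_factor p.+1 q = coef_factor p q.
Proof. by move=> qp; rewrite /coef_factor ltnS leq_eqVlt val_eqE (negbTE qp). Qed.

Lemma coef_prod_splitS p : coef_prod p.+1 =
  'C(m p, x p)%:R * poch (base p + 1) (gap p) * \prod_(q < N | q != p) coef_factor p q.
Proof.
rewrite /coef_prod (bigD1 p) //= {1}/coef_factor ltnSn.
by under eq_bigr => q qp do rewrite coef_factor_ne //.
Qed.

Lemma coef_prod_split p : coef_prod p =
  'C(m p, x p)%:R * poch (base p) (gap p) * \prod_(q < N | q != p) coef_factor p q.
Proof. by rewrite /coef_prod (bigD1 p) //= {1}/coef_factor ltnn. Qed.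

Lemma CcoefE : Ccoef omega a m x = prefactor d * coef_prod N.
Proof.
rewrite /Ccoef /coef_prod; congr (_ * _); apply: eq_bigr => q _.
by rewrite !psum_tupE /coef_factor ltn_ord.
Qed.

Lemma Ccoef_decr_factor p q : (0 < m p)%N -> q != p ->
  'C(decr m p q, x q)%:R * poch ((psum (tup (decr m p)) 1 q)%:~R
     + (psum (tup x) 1 q.+1)%:~R + (psum (ellZ ell) q.+1 N)%:~R + a q + omega + 1)
     (decr m p q - x q)
  = coef_factor p q.
Proof.
move=> mp qp; rewrite !psum_tupE presum_decr // decrE (negbTE qp) /coef_factor /base.
case: ltngtP => [_|_|/val_inj eqpq].
- by congr (_ * poch _ _); rewrite /=; ring.
- by rewrite subr0.
- by rewrite eqpq eqxx in qp.
Qed.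

Lemma Ccoef_decr p : (x p < m p)%N ->
  Ccoef omega a (decr m p) x * (m p)%:R = prefactor d.-1 * (coef_prod p.+1 - coef_prod p).
Proof.
move=> lt_p; have mp : (0 < m p)%N by lia.
rewrite /Ccoef; have -> : (nsum (decr m p) - nsum x)%N = d.-1.
  by have := nsum_decr mp; lia.
set P := \prod_(q < N) _.
suff <- : P * (m p)%:R = coef_prod p.+1 - coef_prod p by rewrite mulrA.
rewrite coef_prod_splitS coef_prod_split /P (bigD1 p) //=.
under eq_bigr => q qp do rewrite Ccoef_decr_factor //.
rewrite !psum_tupE presum_decr // ltnn subr0 decrE eqxx -/(base p).
have gapE : gap p = ((m p).-1 - x p).+1 by rewrite /gap; lia.
have binE : (m p)%:R * 'C((m p).-1, x p)%:R = (gap p)%:R * 'C(m p, x p)%:R :> C.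
  by rewrite -!natrM mul_bin_down.
rewrite -mulrBl -mulrBr gapE -poch_shiftS -gapE.
transitivity (poch (base p + 1) ((m p).-1 - x p) * ((m p)%:R * 'C((m p).-1, x p)%:R)
              * \prod_(q < N | q != p) coef_factor p q); first by ring.
by rewrite binE gapE; ring.
Qed.

Lemma coef_prod_gap0 p : gap p = 0%N -> coef_prod p.+1 - coef_prod p = 0.
Proof. by move=> g0; rewrite coef_prod_splitS coef_prod_split g0 !poch0 subrr. Qed.

Lemma Vx_decr_mul p :
  Vx omega a x (decr m p) * (m p)%:R = prefactor d.-1 * (coef_prod p.+1 - coef_prod p).
Proof.
have [mp0|mp] := posnP (m p).
  by rewrite mp0 mulr0 coef_prod_gap0 ?mulr0 // /gap mp0.
rewrite VxE valid_decr // idx_le_decr //=; case: ltnP => [lt_p|ge_p].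
  exact: Ccoef_decr.
by rewrite mul0r coef_prod_gap0 ?mulr0 // /gap; have := x_le_m_at p; lia.
Qed.

Lemma xi_tupE p : xi (tup m) p = h * (base p + (gap p)%:R + excess p) * (m p)%:R.
Proof.
by rewrite /xi !psum_tupE /base /gap /excess !presumS natrB ?x_le_m_at //; ring.
Qed.

Lemma coef_prod_step p :
  (base p + (gap p)%:R + excess p) * (coef_prod p.+1 - coef_prod p)
  = excess p.+1 * coef_prod p.+1 - excess p * coef_prod p.
Proof.
have -> : excess p.+1 = excess p + (gap p)%:R.
  by rewrite /excess /gap !presumS natrB ?x_le_m_at //; ring.
rewrite coef_prod_splitS coef_prod_split.
have := poch_shift (base p) (gap p).
move: (poch (base p + 1) _) (poch (base p) _) => P1 P0 shiftE.
transitivity ((base p + (gap p)%:R) * (P1 - P0) * ('C(m p, x p)%:R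
   * \prod_(q < N | q != p) coef_factor p q)
   + excess p * ('C(m p, x p)%:R * (P1 - P0) * \prod_(q < N | q != p) coef_factor p q)).
  by ring.
by rewrite shiftE; ring.
Qed.

Lemma sum_Vx_decr_xi :
  \sum_(p < N) Vx omega a x (decr m p) * xi (tup m) p
  = h * prefactor d.-1 * d%:R * coef_prod N.
Proof.
have termE p : Vx omega a x (decr m p) * xi (tup m) p
    = h * prefactor d.-1 * (excess p.+1 * coef_prod p.+1 - excess p * coef_prod p).
  rewrite xi_tupE -coef_prod_step.
  transitivity (h * (base p + (gap p)%:R + excess p) * (Vx omega a x (decr m p) * (m p)%:R)).
    by ring.
  by rewrite Vx_decr_mul; ring.
rewrite (eq_bigr _ (fun p _ => termE p)) -mulr_sumr.
rewrite -(big_mkord xpredT (fun j => excess j.+1 * coef_prod j.+1 - excess j * coef_prod j)).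
rewrite telescope_sumr // /excess !presum0 subrr mul0r subr0 !presumN -natrB.
  by rewrite mulrA.
exact: nsum_le.
Qed.

End Dominated.

Lemma Vx_eigen_coord :
  (forall k : nat, (1 <= k <= (2 * \sum_(p < N) ell p).-1)%N -> omega != - k%:R) ->
  Vx omega a x m * theta (tabs (tup m)) + \sum_(p < N) Vx omega a x (decr m p) * xi (tup m) p
  = theta (tabs (tup x)) * Vx omega a x m.
Proof.
move=> omega_nondeg; have [x_le_m|x_not_le_m] := boolP (idx_le x m); last first.
  rewrite VxE (negbTE x_not_le_m) andbF mul0r mulr0 add0r big1 // => p _.
  rewrite VxE; case: ifP => [/andP[_ /idx_le_decrW le_xm]|_]; last by rewrite mul0r.
  by rewrite le_xm in x_not_le_m.
rewrite sum_Vx_decr_xi // VxE valid_m x_le_m CcoefE /theta !tabs_tupE.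
have le_sum := nsum_le x_le_m.
case Ed: (nsum m - nsum x)%N => [|d].
  have -> : nsum m = nsum x by lia.
  by rewrite mulr0 mul0r addr0 mulrC.
have msumE : nsum m = (nsum x + d).+1 by lia.
have c_neq0 : (2 * nsum x)%:R + omega + 1 + d%:R != 0.
  have -> : (2 * nsum x)%:R + omega + 1 + d%:R = omega + (nsum x + nsum m)%:R.
    by rewrite msumE -addSn !natrD; ring.
  rewrite addr_eq0; apply: omega_nondeg; have := nsum_valid valid_m; lia.
(* The Pochhammer symbol is only inverted, so only its last factor must be nonzero. *)
rewrite pochS invfM exprS /= msumE.
move: (poch _ d)^-1 => P; rewrite -natr1 natrD natrM in c_neq0 *.
by field.
Qed.

End EigenCoordinate.

Theorem mainTheorem2 (C : numClosedFieldType) (N : nat) (ell : 'I_N -> nat)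
  (theta0 h omega : C) (a : 'I_N -> C) (hs omegas : C) :
  (0 < N)%N ->
  h != 0 -> hs != 0 ->
  (forall k : nat, (1 <= k <= (2 * \sum_(p < N) ell p).-1)%N ->
     omega != - k%:R /\ omegas != - k%:R) ->
  (forall (i : 'I_N) (k : nat), (1 <= k <= ell i)%N ->
     [/\ a i != - k%:R,
         a i + omega - omegas != - k%:R,
         a i - (\sum_(p < N) ell p)%:R - omegas != - k%:R &
         a i + (\sum_(p < N) ell p)%:R + omega != - k%:R]) ->
  (forall (i j : 'I_N) (ei ej : bool),
     gen_pos (Sset omega omegas ei (ell i) (a i))
             (Sset omega omegas ej (ell j) (a j))) ->
  forall x : {ffun 'I_N -> 'I_(bnd ell)}, valid x ->
    Aop theta0 h omega a (Vx omega a x)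
    = theta theta0 h omega (tabs (tup x)) *: Vx omega a x.
Proof.
move=> _ _ _ omega_nondeg _ _ x _; apply/ffunP => m; rewrite scale_ffunE.
have [vm|im] := boolP (valid m); last by rewrite Aop_invalid // VxE (negbTE im) mulr0.
by rewrite Aop_valid //; apply: Vx_eigen_coord => // k /omega_nondeg[].
Qed.
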